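(* Let $G=(V,E)$ be a finite simple graph, $\mathbb{K}$ a field, $R=E_{\mathbb{K}}[\mathrm{HSTAB}(G)]$ and $\omega$ the canonical ideal of $R$. Let $n\in\mathbb{Z}$ and $\mu\in\mathbb{Z}^{V^-}$. Then $T^\mu\in\omega^{(n)}$ if and only if $\mu\in U^{(n)}$, where $U^{(n)}$ is the set of $\mu\in\mathbb{Z}^{V^-}$ such that $\mu(z)\ge n$ for all $z\in V$, $\mu^+(K)\le \mu(-\infty)-n$ for every maximal clique $K$ of $G$, and $\mu^+(C)\le \mu(-\infty)\frac{\#C-1}{2}-n$ for every odd cycle $C$ of $G$ without chord and of length at least $5$.
   Context: Graphs are finite simple without loops. For $f\in\mathbb{R}^V$ (or $\mathbb{Z}^{V^-}$) and $B\subseteq V$, $f^+(B)=\sum_{b\in B}f(b)$. An odd cycle is (the vertex set $C$ of) a cycle of odd length; ''without chord'' means no two non-consecutive vertices are adjacent. $\mathrm{HSTAB}(G)$ is the set of $f\in\mathbb{R}^V$ with $f(x)\ge0$ for all $x\in V$, $f^+(K)\le1$ for every clique $K$, and $f^+(C)\le\frac{\#C-1}{2}$ for every odd cycle $C$. With $-\infty$ a new symbol, $V^-=V\cup\{-\infty\}$, $T^f=\prod_{x\in V^-}T_x^{f(x)}$ for $f\in\mathbb{Z}^{V^-}$, $\deg T_x=0$ ($x\in V$), $\deg T_{-\infty}=1$, the Ehrhart ring is $E_{\mathbb{K}}[\mathrm{HSTAB}(G)]=\mathbb{K}[T^f: f(-\infty)>0,\ \frac{1}{f(-\infty)}f|_V\in\mathrm{HSTAB}(G)]$.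 Its canonical ideal $\omega$ is the $\mathbb{K}$-span of the $T^f$ with $f(-\infty)>0$ and $\frac{1}{f(-\infty)}f|_V$ in the relative interior of $\mathrm{HSTAB}(G)$. For a Noetherian normal domain $R$ with quotient field $Q(R)$, the divisorial ideals form a group under $I\cdot J=R:_{Q(R)}(R:_{Q(R)}IJ)$; $I^{(n)}$ denotes the $n$-th power of $I$ in this group (so $\omega^{(-1)}=R:_{Q(R)}\omega$, $\omega^{(0)}=R$). *)

From HB Require Import structures.
From mathcomp Require Import all_boot all_order all_algebra fraction.
From mathcomp Require Import mpoly.
From mathcomp Require Import Rstruct.

Set Implicit Arguments.
Unset Strict Implicit.
Unset Printing Implicit Defensive.

Import Order.TTheory GRing.Theory Num.Theory.
Local Open Scope ring_scope.

(* Graphs: a finite simple graph on the finite vertex type V is a      *)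
(* symmetric irreflexive relation e : rel V.                            *)
(* The vertex set V^- = V ∪ {-∞} is modelled by option V, with         *)
(* None = -∞ and Some x = x.                                           *)

Section Graph.
Variables (V : finType) (e : rel V).

Definition is_clique (K : {set V}) : bool :=
  [forall x in K, forall y in K, (x != y) ==> e x y].

Definition is_maximal_clique (K : {set V}) : bool :=
  is_clique K && [forall K' : {set V}, (K \proper K') ==> ~~ is_clique K'].

Definition is_cycle_seq (s : seq V) : bool :=
  [&& (3 <= size s)%N, uniq s & cycle e s].

Definition is_odd_cycle (C : {set V}) : Prop :=
  exists s : seq V, [/\ is_cycle_seq s, odd (size s) & C = [set x in s]].

Definition is_chordless_odd_cycle (C : {set V}) : Prop :=
  exists s : seq V,
    [/\ is_cycle_seq s, odd (size s), C = [set x in s] &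
        forall (x0 : V) (i j : nat), (i < size s)%N -> (j < size s)%N ->
          e (nth x0 s i) (nth x0 s j) ->
          (j = (i.+1 %% size s)%N) \/ (i = (j.+1 %% size s)%N)].

Local Notation RR := Rdefinitions.R.

Definition HSTAB (f : V -> RR) : Prop :=
  [/\ (forall x, 0 <= f x),
      (forall K : {set V}, is_clique K -> \sum_(x in K) f x <= 1) &
      (forall C : {set V}, is_odd_cycle C ->
         \sum_(x in C) f x <= ((#|C|)%:R - 1) / 2)].

Definition affine_hull (S : (V -> RR) -> Prop) (q : V -> RR) : Prop :=
  exists (m : nat) (lam : 'I_m -> RR) (pt : 'I_m -> V -> RR),
    [/\ (forall i, S (pt i)),
        \sum_(i < m) lam i = 1 &
        forall x, q x = \sum_(i < m) lam i * pt i x].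

Definition rel_interior (S : (V -> RR) -> Prop) (p : V -> RR) : Prop :=
  S p /\ exists eps : RR, 0 < eps /\
    forall q, affine_hull S q -> (forall x, `|q x - p x| < eps) -> S q.

Definition normalize (f : option V -> int) : V -> RR :=
  fun x => (f (Some x))%:~R / (f None)%:~R.

(* The Laurent monomials T^f inside the field K(T_z : z in V^-),       *)
(* realised as the fraction field of the polynomial ring in the        *)
(* variables T_z = 'X_(enum_rank z).                                   *)

Variable K : fieldType.

Definition Lfield := {fraction {mpoly K[#|{: option V}|]}}.

Definition tofracL (p : {mpoly K[#|{: option V}|]}) : Lfield :=
  @FracField.tofrac _ p.

Definition Tvar (z : option V) : Lfield := tofracL 'X_(enum_rank z).

Definition Tmon (f : option V -> int) : Lfield :=
  \prod_(z : option V) Tvar z ^ (f z).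

Definition constL (c : K) : Lfield := tofracL (c%:MP).

Definition ehrhart_gen (f : option V -> int) : Prop :=
  (0 < f None)%R /\ HSTAB (normalize f).

(* R = E_K[HSTAB(G)] = K[T^f : f(-∞) > 0, f|_V / f(-∞) in HSTAB(G)],
   the K-subalgebra of Lfield generated by these monomials. *)
Inductive inR : Lfield -> Prop :=
  | inR_const c : inR (constL c)
  | inR_gen f : ehrhart_gen f -> inR (Tmon f)
  | inR_add a b : inR a -> inR b -> inR (a + b)
  | inR_mul a b : inR a -> inR b -> inR (a * b).

Definition QR (x : Lfield) : Prop :=
  exists a b, [/\ inR a, inR b, b != 0 & x = a / b].

Definition omega_gen (f : option V -> int) : Prop :=
  (0 < f None)%R /\ rel_interior HSTAB (normalize f).

Definition omega (x : Lfield) : Prop :=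
  exists (m : nat) (c : 'I_m -> K) (f : 'I_m -> option V -> int),
    (forall i, omega_gen (f i)) /\
    x = \sum_(i < m) constL (c i) * Tmon (f i).

(* Fractional ideals are subsets of Q(R) (predicates on Lfield).        *)

Definition colonR (I : Lfield -> Prop) (x : Lfield) : Prop :=
  QR x /\ forall y, I y -> inR (x * y).

Definition idprod (I J : Lfield -> Prop) (x : Lfield) : Prop :=
  exists (m : nat) (a b : 'I_m -> Lfield),
    (forall i, I (a i) /\ J (b i)) /\
    x = \sum_(i < m) a i * b i.

Definition dmul (I J : Lfield -> Prop) : Lfield -> Prop :=
  colonR (colonR (idprod I J)).

(* n-th power in the group: I^{(0)} = R, I^{(m)} = I . I^{(m-1)} for m>0,
   and I^{(-m)} = (I^{(-1)})^{(m)} with I^{(-1)} = R :_{Q(R)} I. *)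
Definition dpow (I : Lfield -> Prop) (n : int) : Lfield -> Prop :=
  match n with
  | Posz m => iter m (dmul I) inR
  | Negz m => iter m.+1 (dmul (colonR I)) inR
  end.

Definition in_U (n : int) (mu : option V -> int) : Prop :=
  [/\ (forall z : V, n <= mu (Some z)),
      (forall Kc : {set V}, is_maximal_clique Kc ->
         \sum_(x in Kc) mu (Some x) <= mu None - n) &
      (forall C : {set V}, is_chordless_odd_cycle C -> (5 <= #|C|)%N ->
         \sum_(x in C) mu (Some x) <= mu None * ((#|C|).-1./2)%:Z - n)].

End Graph.

From HB Require Import structures.
From mathcomp Require Import all_boot all_order all_algebra fraction.
From mathcomp Require Import mpoly.
From mathcomp Require Import Rstruct.
From mathcomp Require Import zify ring lra.
From Stdlib Require Classical_Prop.
From Stdlib Require Import FunctionalExtensionality PropExtensionality.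

(* Write M_a for the K-span of the monomials T^mu with mu in U^(a).  HSTAB(G) is cut
   out by the nonnegativity, maximal clique and chordless odd cycle (length >= 5)
   inequalities: a chord splits any other odd cycle into a shorter odd cycle and an
   even path, whose consecutive vertices form cliques.  Its relative interior is where
   all these inequalities are strict, i.e. have slack at least 1 at lattice points, so
   R = M_0 and omega = M_1.  Distinct Laurent monomials are linearly independent, so
   membership in M_a is decided coefficientwise; since every facet inequality of
   U^(a) is attained at every level a, this yields R :_Q M_a = M_(-a), hence
   M_a . M_b = M_(a+b) and omega^(n) = M_n, which contains T^mu iff mu is in U^(n). *)

Set Implicit Arguments.
Unset Strict Implicit.
Unset Printing Implicit Defensive.

Import Order.TTheory GRing.Theory Num.Theory.
Local Open Scope ring_scope.

Section Cliques.
Variables (V : finType) (e : rel V).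
Hypothesis e_sym : ssrbool.symmetric e.

Lemma cliqueP (K : {set V}) :
  reflect {in K &, forall x y, x != y -> e x y} (is_clique e K).
Proof.
apply: (iffP forall_inP) => [cK x y xK yK | cK x xK].
  by move/forall_inP/(_ y yK)/implyP: (cK x xK).
by apply/forall_inP => y yK; apply/implyP; apply: cK.
Qed.

Lemma clique1 z : is_clique e [set z].
Proof. by apply/cliqueP => x y; rewrite !inE => /eqP-> /eqP->; rewrite eqxx. Qed.

Lemma clique2 x y : e x y -> is_clique e [set x; y].
Proof.
move=> exy; apply/cliqueP => a b; rewrite !inE.
by move=> /orP[]/eqP-> /orP[]/eqP->; rewrite ?eqxx // e_sym.
Qed.

Lemma triangle_clique a b c : cycle e [:: a; b; c] -> is_clique e [set x in [:: a; b; c]].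
Proof.
move=> /and4P[eab ebc eca _]; apply/cliqueP => x y; rewrite !inE.
by move=> /or3P[]/eqP-> /or3P[]/eqP->; rewrite ?eqxx // => _; rewrite ?eab ?ebc ?eca // e_sym.
Qed.

Lemma maximal_cliqueP (K : {set V}) :
  reflect (is_clique e K /\ forall K', is_clique e K' -> K \subset K' -> K' = K)
          (is_maximal_clique e K).
Proof.
apply: (iffP andP) => -[cK maxK]; split=> //.
  move=> K' cK' sKK'; apply/eqP; rewrite eq_sym eqEproper sKK'; apply/negP => pKK'.
  by move/forallP/(_ K')/implyP/(_ pKK'): maxK; rewrite cK'.
apply/forallP => K'; apply/implyP => pKK'; apply/negP => cK'.
have eqK := maxK K' cK' (proper_sub pKK').
by rewrite eqK properxx in pKK'.
Qed.

Lemma maximal_clique_clique (K : {set V}) : is_maximal_clique e K -> is_clique e K.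
Proof. by case/andP. Qed.

Lemma maximal_clique_exists (K : {set V}) :
  is_clique e K -> exists2 K', is_maximal_clique e K' & K \subset K'.
Proof.
move=> cK; have [K' /maxsetP maxK' sKK'] := @maxset_exists _ (is_clique e) K cK.
by exists K' => //; apply/maximal_cliqueP.
Qed.

Lemma ex_maximal_clique : exists K, is_maximal_clique e K.
Proof.
have [|K mK _] := @maximal_clique_exists set0; last by exists K.
by apply/cliqueP => x y; rewrite inE.
Qed.

Lemma vertex_maximal_clique z : exists2 K, is_maximal_clique e K & z \in K.
Proof.
have [K mK /subsetP sK] := maximal_clique_exists (clique1 z).
by exists K => //; apply: sK; rewrite inE.
Qed.

Lemma maximal_clique_card_gt0 (K : {set V}) (z : V) :
  is_maximal_clique e K -> (0 < #|K|)%N.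
Proof.
case/maximal_cliqueP => _ maxK; rewrite card_gt0; apply: contraTneq isT => K0.
by have := maxK [set z] (clique1 z); rewrite K0 sub0set => /(_ isT)/setP/(_ z); rewrite !inE eqxx.
Qed.

End Cliques.

Section ChordlessCycles.
Variables (V : finType) (e : rel V).
Hypothesis e_sym : ssrbool.symmetric e.

Definition chordless (s : seq V) : bool :=
  [forall x in s, forall y in s, e x y ==> (y == next s x) || (x == next s y)].

Lemma chordless_adj (s : seq V) x y : chordless s -> x \in s -> y \in s -> e x y ->
  y = next s x \/ x = next s y.
Proof.
move=> /forall_inP/(_ x) ch xs ys exy.
by have /orP[/eqP|/eqP] := implyP (forall_inP (ch xs) y ys) exy; [left | right].
Qed.

Lemma card_set_uniq (s : seq V) : uniq s -> #|[set x in s]| = size s.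
Proof. by move=> Us; rewrite cardsE; apply/card_uniqP. Qed.

Lemma succ_mod_cases (i k : nat) : (i < k)%N ->
  (i.+1 %% k = i.+1 /\ i.+1 < k)%N \/ (i.+1 %% k = 0 /\ i.+1 = k)%N.
Proof.
move=> ltik; have [lt|eq] : (i.+1 < k)%N \/ i.+1 = k by lia.
  by left; rewrite modn_small.
by right; rewrite eq modnn.
Qed.

Lemma next_nth_mod (s : seq V) x0 i : uniq s -> (i < size s)%N ->
  next s (nth x0 s i) = nth x0 s (i.+1 %% size s).
Proof.
case: s => [|y p] // Us lti; rewrite next_nth mem_nth // index_uniq //.
case: (succ_mod_cases lti) => -[-> lt] /=.
  by apply: set_nth_default; rewrite /= ltnS in lt.
by rewrite nth_default //; move: lt => /= -[->].
Qed.

Lemma index_next (s : seq V) x : uniq s -> x \in s ->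
  index (next s x) s = ((index x s).+1 %% size s)%N.
Proof.
move=> Us xs; have ltx : (index x s < size s)%N by rewrite index_mem.
by rewrite -{1}(nth_index x xs) next_nth_mod // index_uniq // ltn_mod (leq_ltn_trans _ ltx).
Qed.

Lemma next_iter (s : seq V) x0 i d : uniq s -> (i < size s)%N ->
  iter d (next s) (nth x0 s i) = nth x0 s ((i + d) %% size s).
Proof.
move=> Us lti; elim: d => [|d IH]; first by rewrite addn0 modn_small.
rewrite iterS IH next_nth_mod // ?ltn_mod ?(leq_ltn_trans _ lti) //.
by rewrite -addn1 modnDml addn1 addnS.
Qed.

Lemma chordless_nthP (s : seq V) : uniq s ->
  (forall (x0 : V) (i j : nat), (i < size s)%N -> (j < size s)%N ->
     e (nth x0 s i) (nth x0 s j) -> j = (i.+1 %% size s)%N \/ i = (j.+1 %% size s)%N)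
  <-> chordless s.
Proof.
move=> Us; split=> [ch | ch x0 i j lti ltj eij].
  apply/forall_inP => x xs; apply/forall_inP => y ys; apply/implyP => exy.
  have := ch x (index x s) (index y s); rewrite !index_mem !nth_index //.
  case/(_ xs ys exy) => E; apply/orP; [left | right]; apply/eqP.
    by rewrite -(nth_index x ys) E -index_next // nth_index ?mem_next.
  by rewrite -(nth_index y xs) E -index_next // nth_index ?mem_next.
have [|] := chordless_adj ch (mem_nth x0 lti) (mem_nth x0 ltj) eij => /(congr1 (index^~ s)).
  by rewrite index_next ?mem_nth // !index_uniq //; left.
by rewrite index_next ?mem_nth // !index_uniq //; right.
Qed.

Lemma card_clique_chordless (K : {set V}) (s : seq V) :
  is_clique e K -> uniq s -> (4 <= size s)%N -> chordless s ->
  (#|K :&: [set x in s]| <= 2)%N.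
Proof.
move=> /cliqueP cK Us s4 ch; rewrite leqNgt; apply/negP => /card_gt2P.
move=> [x [y [z [[xA yA zA] [nxy nyz nzx]]]]].
have succ a b : a \in K :&: [set x in s] -> b \in K :&: [set x in s] -> a != b ->
    index b s = ((index a s).+1 %% size s)%N \/ index a s = ((index b s).+1 %% size s)%N.
  rewrite !inE => /andP[aK a_s] /andP[bK b_s] nab.
  by case: (chordless_adj ch a_s b_s (cK a b aK bK nab)) => ->; rewrite index_next //; auto.
have dist a b : a \in K :&: [set x in s] -> b \in K :&: [set x in s] -> a != b ->
    index a s != index b s.
  rewrite !inE => /andP[_ a_s] /andP[_ b_s]; apply: contra => /eqP.
  by move/(index_inj a a_s b_s) => ->.
have lt_index a : a \in K :&: [set x in s] -> (index a s < size s)%N.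
  by rewrite !inE index_mem => /andP[].
move: (succ x y xA yA nxy) (succ y z yA zA nyz) (succ z x zA xA nzx).
move: (dist x y xA yA nxy) (dist y z yA zA nyz) (dist z x zA xA nzx).
move: (succ_mod_cases (lt_index x xA)) (succ_mod_cases (lt_index y yA)).
move: (succ_mod_cases (lt_index z zA)) (lt_index x xA) (lt_index y yA) (lt_index z zA).
move: (index x s) (index y s) (index z s) (size s) s4 => i j l k k4.
move: (i.+1 %% k)%N (j.+1 %% k)%N (l.+1 %% k)%N => a b c.
lia.
Qed.

Lemma next_neq_prev (s : seq V) x : uniq s -> (3 <= size s)%N -> x \in s ->
  next s x != prev s x.
Proof.
move=> Us s3 xs; apply/eqP => E.
have ltx : (index x s < size s)%N by rewrite index_mem.
have := next_iter x 2 Us ltx; rewrite /= nth_index // E next_prev //.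
rewrite -{1}(nth_index x xs) => /eqP; rewrite nth_uniq ?ltn_mod //; last by lia.
move/eqP; move: ltx s3; move: (index x s) (size s) => i k lti k3.
have [lt|[Ek|Ek]] : (i + 2 < k \/ i + 2 = k \/ i + 2 = k.+1)%N by lia.
- by rewrite modn_small //; lia.
- by rewrite Ek modnn; lia.
- by rewrite Ek -addn1 modnDl modn_small; lia.
Qed.

Lemma chordless_subcycle (s s' : seq V) : uniq s -> chordless s ->
  uniq s' -> cycle e s' -> (3 <= size s')%N -> {subset s' <= s} -> {subset s <= s'}.
Proof.
move=> Us ch Us' cy' s3 ss'.
have next_closed x : x \in s' -> next s x \in s'.
  move=> xs'; have xs := ss' x xs'.
  have e1 : e x (next s' x) by apply: next_cycle.
  have e2 : e x (prev s' x) by rewrite e_sym; apply: prev_cycle.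
  have y1s : next s' x \in s by rewrite ss' ?mem_next.
  have y2s : prev s' x \in s by rewrite ss' ?mem_prev.
  case: (chordless_adj ch xs y1s e1) => [<-|E1]; first by rewrite mem_next.
  case: (chordless_adj ch xs y2s e2) => [<-|E2]; first by rewrite mem_prev.
  have : next s' x = prev s' x by apply: (can_inj (prev_next Us)); rewrite -E1 -E2.
  by move/eqP; rewrite (negbTE (next_neq_prev Us' s3 xs')).
have [x0 x0s'] : exists x, x \in s'.
  by case: s' s3 {Us' cy' ss' next_closed} => // x; exists x; rewrite inE eqxx.
have x0s := ss' x0 x0s'.
have iter_in d : iter d (next s) x0 \in s' by elim: d => //= d; apply: next_closed.
move=> y ys; have := iter_in (index y s + size s - index x0 s)%N.
have lt0 : (index x0 s < size s)%N by rewrite index_mem.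
have lty : (index y s < size s)%N by rewrite index_mem.
rewrite -[X in iter _ _ X](nth_index x0 x0s) next_iter //.
have -> : (index x0 s + (index y s + size s - index x0 s) = index y s + size s)%N by lia.
by rewrite modnDr modn_small // nth_index.
Qed.

Lemma chordless_odd_cycle_seq (C : {set V}) : is_chordless_odd_cycle e C ->
  exists2 s, C = [set x in s] &
    [/\ uniq s, cycle e s, (3 <= size s)%N, odd (size s) & chordless s].
Proof.
move=> [s [/and3P[s3 Us cy] odd_s -> ch]].
by exists s => //; split=> //; apply/(chordless_nthP Us).
Qed.

Lemma card_chordless_odd_cycle (C : {set V}) :
  is_chordless_odd_cycle e C -> odd #|C| /\ (3 <= #|C|)%N.
Proof. by case/chordless_odd_cycle_seq => s -> [Us _ s3 odd_s _]; rewrite card_set_uniq. Qed.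

Lemma card_clique_chordless_odd_cycle (K C : {set V}) :
  is_clique e K -> is_chordless_odd_cycle e C -> (5 <= #|C|)%N -> (#|K :&: C| <= 2)%N.
Proof.
move=> cK /chordless_odd_cycle_seq[s -> [Us _ _ _ ch]].
by rewrite card_set_uniq // => s5; apply: card_clique_chordless => //; apply: ltnW.
Qed.

Lemma chordless_odd_cycle_subset (C C0 : {set V}) :
  is_chordless_odd_cycle e C -> is_chordless_odd_cycle e C0 -> C \subset C0 -> C = C0.
Proof.
move=> /chordless_odd_cycle_seq[s -> [Us cy s3 _ _]].
move=> /chordless_odd_cycle_seq[s0 -> [Us0 _ _ _ ch0]] /subsetP sub.
have ss0 : {subset s <= s0} by move=> x xs; have := sub x; rewrite !inE; apply.
have s0s := chordless_subcycle Us0 ch0 Us cy s3 ss0.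
by apply/setP => x; rewrite !inE; apply/idP/idP; [apply: ss0 | apply: s0s].
Qed.

End ChordlessCycles.

Section ChordSplit.
Variables (V : finType) (e : rel V).
Hypotheses (e_sym : ssrbool.symmetric e) (e_irr : irreflexive e).

Lemma next_rot_head (s : seq V) i x y p :
  uniq s -> rot i s = x :: y :: p -> next s x = y.
Proof. by move=> Us Ei; rewrite -(next_rot i Us) Ei /= eqxx. Qed.

Lemma cycle_chord_split (s : seq V) x y :
  uniq s -> cycle e s -> x \in s -> y \in s -> e x y ->
  y != next s x -> x != next s y ->
  exists p1 p2, [/\ perm_eq s (x :: p1 ++ y :: p2), p1 != [::], p2 != [::],
                    cycle e (x :: rcons p1 y) & cycle e (y :: rcons p2 x)].
Proof.
move=> Us cy xs ys exy nyx nxy.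
have neq_xy : x != y by apply: contraTneq exy => ->; rewrite e_irr.
case: (rot_to_arc Us xs ys neq_xy) => i p1 p2 _ arc_yx Ei.
case: (rot_to_arc Us ys xs _) => [|j q1 q2 arc_yx' _ Ej]; first by rewrite eq_sym.
have q1E : q1 = p2 by move: arc_yx'; rewrite -arc_yx => -[].
subst q1.
have := cy; rewrite -(rot_cycle i) Ei /= rcons_cat cat_path /= => /and3P[P1 e1 P2].
exists p1, p2; split.
- by rewrite -Ei perm_sym perm_rot.
- by apply: contraNneq nyx => p10; rewrite (@next_rot_head s i x y p2) // Ei p10.
- by apply: contraNneq nxy => p20; rewrite (@next_rot_head s j y x q2) // Ej p20.
- by rewrite /= rcons_path rcons_path P1 e1 last_rcons e_sym exy.
- by rewrite /= rcons_path P2 last_rcons exy.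
Qed.

Lemma odd_size_split (T : Type) (a b : T) (p q : seq T) :
  odd (size (a :: p ++ b :: q)) = odd (size p) (+) odd (size q).
Proof. by rewrite /= size_cat /= oddD addbN negbK. Qed.

Lemma odd_cycle_chord_split (s : seq V) x y :
  uniq s -> cycle e s -> odd (size s) -> x \in s -> y \in s -> e x y ->
  y != next s x -> x != next s y ->
  exists x' y' p1 p2, [/\ perm_eq s (x' :: p1 ++ y' :: p2), odd (size p1), p2 != [::],
                         cycle e (x' :: rcons p1 y') & path e y' p2].
Proof.
move=> Us cy odd_s xs ys exy nyx nxy.
have [p1 [p2 [perm_s p10 p20 cy1 cy2]]] := cycle_chord_split Us cy xs ys exy nyx nxy.
have cycle_path a b p : cycle e (a :: rcons p b) -> path e a p.
  by rewrite /= !rcons_path => /andP[/andP[]].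
move: odd_s; rewrite (perm_size perm_s) odd_size_split.
case: (boolP (odd (size p1))) => [odd_p1 _ | _ /= odd_p2].
  by exists x, y, p1, p2; split=> //; apply: cycle_path cy2.
exists y, x, p2, p1; split=> //; last exact: cycle_path cy1.
by rewrite (perm_trans perm_s) //; apply/permPl; apply: (perm_catC (x :: p1)).
Qed.

End ChordSplit.

Section OddCycleInequality.
Variables (V : finType) (e : rel V).
Hypotheses (e_sym : ssrbool.symmetric e) (e_irr : irreflexive e).
Variables (R : realFieldType) (t : R) (f : V -> R).
Hypothesis f_ge0 : forall z, 0 <= f z.
Hypothesis f_clique : forall K, is_maximal_clique e K -> \sum_(x in K) f x <= t.
Hypothesis f_chordless : forall C, is_chordless_odd_cycle e C -> (5 <= #|C|)%N ->
  (\sum_(x in C) f x) * 2 <= t * (#|C|.-1)%:R.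

Lemma clique_sum_le (K : {set V}) : is_clique e K -> \sum_(x in K) f x <= t.
Proof.
move=> cK; have [K' mK' sKK'] := maximal_clique_exists cK.
apply: le_trans (f_clique mK'); rewrite [leRHS](big_setID K) /= (setIidPr sKK').
by rewrite lerDl sumr_ge0.
Qed.

Lemma sum_set_uniq (s : seq V) : uniq s -> \sum_(y in [set y in s]) f y = \sum_(y <- s) f y.
Proof. by move=> Us; rewrite big_uniq //; apply: eq_bigl => y; rewrite inE. Qed.

Lemma even_path_sum_le x p : path e x p -> ~~ odd (size p) ->
  (\sum_(y <- p) f y) * 2 <= t * (size p)%:R.
Proof.
have [n] := ubnP (size p); elim: n x p => // n IH x [|y1 [|y2 p]] //=.
  by rewrite big_nil mul0r mulr0.
rewrite negbK ltnS => ltp /and3P[_ e12 P] ev.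
have := IH y2 p (ltnW ltp) P ev.
have := clique_sum_le (clique2 e_sym e12).
have ny : y1 \notin [set y2] by rewrite inE; apply: contraTneq e12 => ->; rewrite e_irr.
rewrite big_setU1 //= big_set1 !big_cons -addn2 natrD.
lra.
Qed.

Lemma odd_cycle_seq_sum_le (s : seq V) : uniq s -> cycle e s -> odd (size s) ->
  (3 <= size s)%N -> (\sum_(y <- s) f y) * 2 <= t * (size s).-1%:R.
Proof.
have [n] := ubnP (size s); elim: n s => // n IH s; rewrite ltnS => les Us cy odd_s s3.
have [s_eq3|s5] : size s = 3%N \/ (5 <= size s)%N.
  by move: odd_s s3; case: (size s) => [|[|[|[|[|k]]]]]; [lia|lia|lia|left|lia|right].
  case: s s_eq3 Us cy {IH les odd_s s3} => [|a [|b [|c [|]]]] // _ Us cy.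
  by have := clique_sum_le (triangle_clique e_sym cy); rewrite sum_set_uniq //=; lra.
have [ch|/forall_inPn[x xs /forall_inPn[y ys]]] := boolP (chordless e s).
  have Cch : is_chordless_odd_cycle e [set y in s].
    by exists s; split=> //; [rewrite /is_cycle_seq s3 Us cy | apply/(chordless_nthP e Us)].
  by have := f_chordless Cch; rewrite card_set_uniq // sum_set_uniq //; apply.
rewrite negb_imply => /andP[exy /norP[nyx nxy]].
have [x' [y' [p1 [p2 [perm_s odd_p1 p20 cyA P2]]]]] :=
  odd_cycle_chord_split e_sym e_irr Us cy odd_s xs ys exy nyx nxy.
have even_p2 : ~~ odd (size p2).
  by move: odd_s; rewrite (perm_size perm_s) odd_size_split odd_p1.
have UA : uniq (x' :: rcons p1 y').
  by move: Us; rewrite (perm_uniq perm_s) -cat_rcons -cat_cons cat_uniq => /andP[].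
have sA : size (x' :: rcons p1 y') = (size p1).+2 by rewrite /= size_rcons.
have ltA : (size (x' :: rcons p1 y') < n)%N.
  have : (0 < size p2)%N by rewrite lt0n size_eq0.
  by move: les; rewrite (perm_size perm_s) sA /= size_cat /=; clear; lia.
have := IH _ ltA UA cyA; rewrite sA /= negbK odd_p1 !ltnS lt0n size_eq0.
have p10 : p1 != [::] by apply: contraTneq odd_p1 => ->.
rewrite p10 => /(_ isT isT) HA; have HB := even_path_sum_le P2 even_p2.
rewrite (perm_big _ perm_s) (perm_size perm_s) -cat_rcons -cat_cons big_cat size_cat sA.
by rewrite addSn /= natrD; lra.
Qed.

Lemma odd_cycle_sum_le (C : {set V}) : is_odd_cycle e C ->
  (\sum_(x in C) f x) * 2 <= t * (#|C|.-1)%:R.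
Proof.
move=> [s [/and3P[s3 Us cy] odd_s ->]].
by rewrite card_set_uniq // sum_set_uniq //; apply: odd_cycle_seq_sum_le.
Qed.

End OddCycleInequality.

Section Facets.
Variables (V : finType) (e : rel V).

Local Notation exponent := {ffun option V -> int}.

Inductive facet := FVertex of V | FClique of {set V} | FCycle of {set V}.

Definition is_facet (i : facet) : Prop :=
  match i with
  | FVertex _ => True
  | FClique K => is_maximal_clique e K
  | FCycle C => is_chordless_odd_cycle e C /\ (5 <= #|C|)%N
  end.

Definition slack (i : facet) (mu : option V -> int) : int :=
  match i with
  | FVertex z => mu (Some z)
  | FClique K => mu None - \sum_(x in K) mu (Some x)
  | FCycle C => mu None * (#|C|.-1./2)%:Z - \sum_(x in C) mu (Some x)
  end.

Lemma in_UP n mu : in_U e n mu <-> forall i, is_facet i -> n <= slack i mu.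
Proof.
have slackE a s : (n <= a - s) = (s <= a - n) by rewrite lerBrDr addrC -lerBrDr.
split=> [[Hz HK HC] [z|K|C] /= | H].
- by move=> _; apply: Hz.
- by rewrite slackE; apply: HK.
- by case=> Cch C5; rewrite slackE; apply: HC.
split=> [z | K mK | C Cch C5]; first exact: (H (FVertex z)).
  by rewrite -slackE; apply: (H (FClique K)).
by rewrite -slackE; apply: (H (FCycle C)).
Qed.

Lemma ex_facet : exists i, is_facet i.
Proof. by have [K mK] := ex_maximal_clique e; exists (FClique K). Qed.

Lemma ex_violated_facet n mu : ~ in_U e n mu -> exists2 i, is_facet i & slack i mu < n.
Proof.
move=> notU; apply: Classical_Prop.NNPP => noi; apply/notU/in_UP => i Fi.
by rewrite leNgt; apply/negP => lt; apply: noi; exists i.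
Qed.

Lemma slack_lincomb i a b (u w : option V -> int) :
  slack i (fun o => a * u o + b * w o) = a * slack i u + b * slack i w.
Proof. by case: i => [z|K|C] //=; rewrite big_split /= -!mulr_sumr; ring. Qed.

Lemma slackD i (f g : exponent) : slack i (f + g) = slack i f + slack i g.
Proof.
have -> : (f + g : option V -> int) = fun o => 1 * f o + 1 * g o.
  by apply: functional_extensionality => o; rewrite ffunE !mul1r.
by rewrite slack_lincomb !mul1r.
Qed.

Lemma in_U0 : in_U e 0 (0 : exponent).
Proof.
apply/in_UP => i _; have -> : slack i (0 : exponent) = slack i (fun=> 0 * 0 + 0 * 0).
  by congr slack; apply: functional_extensionality => o; rewrite ffunE mulr0 addr0.
by rewrite slack_lincomb !mul0r addr0.
Qed.

Lemma in_U_add a b (f g : exponent) : in_U e a f -> in_U e b g -> in_U e (a + b) (f + g).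
Proof.
move=> /in_UP Uf /in_UP Ug; apply/in_UP => i Fi.
by rewrite slackD lerD ?Uf ?Ug.
Qed.

Lemma in_U_le a b mu : a <= b -> in_U e b mu -> in_U e a mu.
Proof. by move=> le_ab /in_UP U; apply/in_UP => i Fi; apply: le_trans le_ab (U i Fi). Qed.

Lemma in_U_None_ge n mu : 0 <= n -> in_U e n mu -> n <= mu None.
Proof.
move=> n0 /in_UP U; have [K mK] := ex_maximal_clique e.
apply: le_trans (U (FClique K) mK) _; rewrite /= gerBl.
by apply: sumr_ge0 => x _; apply: le_trans n0 (U (FVertex x) I).
Qed.

Lemma half_ge2 (k : nat) : (5 <= k)%N -> 2 <= (k.-1./2)%:Z.
Proof. by rewrite lez_nat; case: k => [|[|[|[|[|k]]]]]. Qed.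

Lemma half_le_card (A : {set V}) : (#|A|.-1./2)%:Z <= #|V|%:Z.
Proof.
rewrite lez_nat; apply: leq_trans (max_card A).
by apply: leq_trans (leq_pred _); rewrite -divn2 leq_div.
Qed.

Lemma predn_double_half (k : nat) : odd k -> k.-1 = (k.-1./2).*2.
Proof. by case: k => //= k odd_k; rewrite -{1}(odd_double_half k) (negbTE odd_k). Qed.

Lemma double_half (k : nat) : odd k -> 2 * (k.-1./2)%:Z = k%:Z - 1.
Proof. by case: k => // k /predn_double_half /= ->; rewrite -muln2; lia. Qed.

Lemma card_le_int (A : {set V}) : #|A|%:Z <= #|V|%:Z.
Proof. by rewrite lez_nat max_card. Qed.

Lemma cardID_int (A B : {set V}) : #|A :&: B|%:Z + #|A :\: B|%:Z = #|A|%:Z.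
Proof. by rewrite -PoszD cardsID. Qed.

Definition piecewise (n0 : int) (B : {set V}) (a b : int) : exponent :=
  [ffun o => if o is Some y then if y \in B then a else b else n0].

Lemma sum_piecewise (A B : {set V}) n0 a b :
  \sum_(x in A) piecewise n0 B a b (Some x) = a * #|A :&: B|%:Z + b * #|A :\: B|%:Z.
Proof.
rewrite (big_setID B) /=; congr (_ + _).
  rewrite (eq_bigr (fun=> a)) => [|x]; last by rewrite !inE ffunE => /andP[_ ->].
  by rewrite sumr_const -mulr_natr natz.
rewrite (eq_bigr (fun=> b)) => [|x]; last by rewrite !inE ffunE => /andP[/negbTE ->].
by rewrite sumr_const -mulr_natr natz.
Qed.

Lemma in_U_exists n : exists mu : exponent, in_U e n mu.
Proof.
have [c [n_le c_ge0]] : exists c : int, n <= c /\ 0 <= c by exists `|n|; rewrite ler_norm.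
exists (piecewise (c * (#|V|%:Z + 1)) set0 c c); apply/in_UP.
move=> [z|K|C] /= Fi; rewrite ?sum_piecewise ?ffunE ?inE //.
  have := card_le_int K; rewrite -(cardID_int K set0).
  move: (#|K :&: set0|%:Z) (#|K :\: set0|%:Z) (#|V|%:Z) => x y v; nia.
case: Fi => _ C5; have := half_ge2 C5; have := half_le_card C.
have := card_le_int C; rewrite -(cardID_int C set0); have : 0 <= #|V|%:Z by [].
move: (#|C :&: set0|%:Z) (#|C :\: set0|%:Z) (#|V|%:Z) (#|C|.-1./2)%:Z => x y v h *.
have : 0 <= c * (v * (h - 1) + h - 1) by apply: mulr_ge0 => //; nia.
nia.
Qed.

Lemma in_U0_cases (f : option V -> int) :
  in_U e 0 f -> (forall o, f o = 0) \/ 0 < f None.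
Proof.
move=> /in_UP U; have [|fN] := ltP 0 (f None); [by right | left].
have slack_K K : is_maximal_clique e K -> \sum_(x in K) f (Some x) <= f None.
  by move=> mK; have := U (FClique K) mK; rewrite subr_ge0.
have fz z : f (Some z) = 0.
  have [K mK zK] := vertex_maximal_clique e z.
  have : f (Some z) <= \sum_(x in K) f (Some x).
    by rewrite (bigD1 z) //= lerDl sumr_ge0 // => x _; apply: (U (FVertex x)).
  have := U (FVertex z) I; have := slack_K K mK; rewrite /=; lia.
have [K mK] := ex_maximal_clique e.
have := slack_K K mK; rewrite big1 // => fN0.
by case=> [z|]; [apply: fz | lia].
Qed.

End Facets.

Section FacetTightness.
Variables (V : finType) (e : rel V).
Hypothesis e_sym : ssrbool.symmetric e.

Local Notation exponent := {ffun option V -> int}.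
Local Notation q := (#|V|%:Z + 1).

(* [w] lies on the facet [i], and on no facet where [u] has slack other than [1];
   adding a large multiple of [w] to [a] times [u] repairs every other facet. *)
Lemma tight_combination i (u w : exponent) (M : int) :
  slack i u = 1 -> slack i w = 0 ->
  (forall j, is_facet e j -> 0 < slack j w \/ slack j w = 0 /\ slack j u = 1) ->
  (forall j, is_facet e j -> `|slack j u| <= M) ->
  forall a, exists mu : exponent, in_U e a mu /\ slack i mu = a.
Proof.
move=> ui wi w_cases u_le a; pose c := `|a| * (M + 1).
have slack_mu j : slack j [ffun o => a * u o + c * w o] = a * slack j u + c * slack j w.
  by rewrite -slack_lincomb; congr slack; apply: functional_extensionality => o; rewrite ffunE.
exists [ffun o => a * u o + c * w o]; rewrite slack_mu ui wi mulr1 mulr0 addr0; split=> //.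
apply/in_UP => j Fj; rewrite slack_mu.
case: (w_cases j Fj) => [w_pos | [-> ->]]; last by rewrite mulr1 mulr0 addr0.
have au : - (`|a| * M) <= a * slack j u.
  have : `|a * slack j u| <= `|a| * M by rewrite normrM ler_wpM2l ?u_le.
  by rewrite ler_norml => /andP[].
have M0 : 0 <= M := le_trans (normr_ge0 _) (u_le j Fj).
have := ler_norm a; rewrite /c; move: au w_pos M0 (normr_ge0 a).
move: (slack j u) (slack j w) `|a| => U W A; nia.
Qed.

Lemma norm_lincomb_le (R : numDomainType) (a b x y : R) :
  `|a| <= 1 -> `|b| <= 1 -> 0 <= x -> 0 <= y -> `|a * x + b * y| <= x + y.
Proof.
move=> a1 b1 x0 y0; apply: le_trans (ler_normD _ _) _.
by rewrite !normrM (ger0_norm x0) (ger0_norm y0) lerD // ler_piMl.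
Qed.

Lemma slack_piecewise_bound j (n0 : int) B (a b : int) : is_facet e j ->
  `|n0| <= 1 -> `|a| <= 1 -> `|b| <= 1 ->
  `|slack j (piecewise n0 B a b)| <= 2 * #|V|%:Z + 1.
Proof.
move=> Fj n1 a1 b1.
have bound (A : {set V}) (c : int) : `|c| <= #|V|%:Z + 1 ->
    `|c - (a * #|A :&: B|%:Z + b * #|A :\: B|%:Z)| <= 2 * #|V|%:Z + 1.
  set s := (a * _ + _) => c_le.
  have s_le : `|s| <= #|A :&: B|%:Z + #|A :\: B|%:Z .
    by apply: norm_lincomb_le.
  have cs_le : `|c - s| <= `|c| + `|s| := ler_normB c s.
  by have := card_le_int A; rewrite -(cardID_int A B); lia.
case: j Fj => [z|K|C] /= Fj; rewrite ?ffunE ?sum_piecewise ?bound //.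
- by case: ifP => _; [apply: le_trans a1 _ | apply: le_trans b1 _]; lia.
- by apply: le_trans n1 _; rewrite lerDr.
- have h_le : `|n0| * (#|C|.-1./2)%:Z <= (#|C|.-1./2)%:Z by rewrite ler_piMl.
  rewrite normrM [`|_%:Z|]ger0_norm // (le_trans h_le) // (le_trans (half_le_card C)) //.
  by rewrite lerDl.
Qed.

Lemma vertex_facet_tight z0 a :
  exists mu : exponent, in_U e a mu /\ slack (FVertex z0) mu = a.
Proof.
apply: (tight_combination (u := piecewise 0 [set z0] 1 0)
          (w := piecewise q [set z0] 0 1) (M := 2 * #|V|%:Z + 1)).
- by rewrite /= ffunE inE eqxx.
- by rewrite /= ffunE inE eqxx.
- move=> [z|K|C] /= Fj; rewrite !ffunE ?sum_piecewise ?inE.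
  + by case: eqP; [right | left].
  + left; have := card_le_int K; rewrite -(cardID_int K [set z0]).
    (* [set] merges two syntactically different elaborations of #|V| for [lia]. *)
    by set v := #|V|%:Z; lia.
  + left; case: Fj => _ C5; have := half_ge2 C5.
    have := card_le_int C; rewrite -(cardID_int C [set z0]).
    by set v := #|V|%:Z; nia.
- by move=> j Fj; apply: slack_piecewise_bound.
Qed.

Lemma clique_facet_tight K0 a : is_maximal_clique e K0 ->
  exists mu : exponent, in_U e a mu /\ slack (FClique K0) mu = a.
Proof.
move=> mK0; apply: (tight_combination (u := piecewise 1 set0 0 0)
          (w := piecewise (q * #|K0|%:Z) K0 q 1) (M := 2 * #|V|%:Z + 1)).
- by rewrite /= ffunE sum_piecewise; ring.
- by rewrite /= ffunE sum_piecewise setIid setDv cards0; ring.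
- move=> [z|K|C] /= Fj; rewrite !ffunE ?sum_piecewise.
  + by left; case: ifP => _; lia.
  + have [->|neK] := eqVneq K K0; [right | left].
      by rewrite setIid setDv cards0; split; ring.
    have ltK0 : (#|K :&: K0| < #|K0|)%N.
      apply: proper_card; rewrite properEneq subsetIr andbT; apply: contraNneq neK => KK0.
      apply/eqP; case/maximal_cliqueP: mK0 => _ maxK0; apply: maxK0.
        exact: maximal_clique_clique Fj.
      by rewrite -KK0 subsetIl.
    have := card_le_int K; rewrite -(cardID_int K K0).
    have : q * (#|K :&: K0|%:Z + 1) <= q * #|K0|%:Z by rewrite ler_pM2l //; lia.
    by set v := #|V|%:Z; nia.
  + left; case: Fj => _ C5; have := half_ge2 C5.
    have [c cC] : exists c, c \in C by apply/set0Pn; rewrite -card_gt0 (leq_trans _ C5).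
    have K0_gt0 := maximal_clique_card_gt0 c mK0.
    have := subset_leq_card (subsetIr C K0); rewrite -lez_nat.
    have := card_le_int C; rewrite -(cardID_int C K0) => C_le CK0_le h2.
    have : q * #|K0|%:Z * 2 <= q * #|K0|%:Z * (#|C|.-1./2)%:Z by rewrite ler_pM2l //; lia.
    by set v := #|V|%:Z; nia.
- by move=> j Fj; apply: slack_piecewise_bound.
Qed.

Lemma cycle_facet_tight C0 a : is_chordless_odd_cycle e C0 -> (5 <= #|C0|)%N ->
  exists mu : exponent, in_U e a mu /\ slack (FCycle C0) mu = a.
Proof.
move=> C0ch C05; have [odd_C0 _] := card_chordless_odd_cycle C0ch.
have [c0 c0C0] : exists c, c \in C0 by apply/set0Pn; rewrite -card_gt0 (leq_trans _ C05).
set k := #|C0|%:Z; have k5 : 5 <= k by rewrite lez_nat.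
have q_gt0 : 0 < q by rewrite ltr_wpDl.
have kq_gt0 : 0 < (k - 1) * q by rewrite mulr_gt0 // subr_gt0 (lt_le_trans _ k5).
set u := piecewise 0 [set c0] (-1) 0; set w := piecewise (2 * k * q) C0 ((k - 1) * q) 1.
have u_C0 : slack (FCycle C0) u = 1.
  by rewrite /= ffunE sum_piecewise (setIidPr _) ?sub1set // cards1; ring.
have w_C0 : slack (FCycle C0) w = 0.
  rewrite /= ffunE sum_piecewise setIid setDv cards0 -/k.
  have := double_half odd_C0; rewrite -/k => hh.
  by transitivity (k * q * (2 * (#|C0|.-1./2)%:Z) - (k - 1) * q * k); [ring | rewrite hh; ring].
apply: (tight_combination (M := 2 * #|V|%:Z + 1) u_C0 w_C0).
- move=> [z|K|C] Fj.
  + by left; rewrite /= ffunE; case: ifP.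
  + left; rewrite /= ffunE sum_piecewise.
    have := card_clique_chordless_odd_cycle (maximal_clique_clique Fj) C0ch C05.
    rewrite -lez_nat => x2; have := card_le_int K; rewrite -(cardID_int K C0).
    have : (k - 1) * q * #|K :&: C0|%:Z <= (k - 1) * q * 2 by rewrite ler_pM2l.
    by set v := #|V|%:Z; have : 0 <= v by []; lia.
  + case: Fj => Cch C5; have [odd_C _] := card_chordless_odd_cycle Cch.
    have [->|neC] := eqVneq C C0; [by right | left; rewrite /= ffunE sum_piecewise].
    have ltC : (#|C :&: C0| < #|C|)%N.
      apply: proper_card; rewrite properEneq subsetIl andbT; apply: contraNneq neC => CC0.
      by apply/eqP; apply: (chordless_odd_cycle_subset e_sym Cch C0ch); rewrite -CC0 subsetIr.
    have hh := double_half odd_C.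
    have E : 2 * k * q * (#|C|.-1./2)%:Z = k * q * (#|C|%:Z - 1) by rewrite -hh; ring.
    have : (k - 1) * q * #|C :&: C0|%:Z <= (k - 1) * q * (#|C|%:Z - 1).
      by rewrite ler_pM2l //; move: ltC; clear; lia.
    have : q * 4 <= q * (#|C|%:Z - 1) by rewrite ler_pM2l //; move: C5; clear; lia.
    have := card_le_int C; have := cardID_int C C0; rewrite E.
    by set v := #|V|%:Z; have : 0 <= v by []; lia.
- by move=> j Fj; apply: slack_piecewise_bound.
Qed.

Lemma facet_tight i a : is_facet e i -> exists mu : exponent, in_U e a mu /\ slack i mu = a.
Proof.
case: i => [z _ | K mK | C [Cch C5]]; first exact: vertex_facet_tight.
  exact: clique_facet_tight.
exact: cycle_facet_tight.
Qed.

End FacetTightness.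

Local Notation RR := Rdefinitions.R.

Lemma sum_option (V : finType) (M : nmodType) (F : option V -> M) :
  \sum_(o : option V) F o = F None + \sum_(z : V) F (Some z).
Proof.
have perm_opt : perm_eq (index_enum {: option V}) (None :: map Some (enum V)).
  apply: uniq_perm; first exact: index_enum_uniq.
    rewrite /= map_inj_uniq ?enum_uniq ?andbT; last by move=> x y [].
    by apply/mapP => -[].
  by move=> [x|]; rewrite mem_index_enum /= ?inE //= (mem_map (@Some_inj _)) mem_enum.
by rewrite (perm_big _ perm_opt) big_cons big_map big_enum.
Qed.

Section Polytope.
Variables (V : finType) (e : rel V).
Hypotheses (e_sym : ssrbool.symmetric e) (e_irr : irreflexive e).

Definition rslack (i : facet V) (g : V -> RR) : RR :=
  match i with
  | FVertex z => g z
  | FClique K => 1 - \sum_(x in K) g x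
  | FCycle C => (#|C|.-1./2)%:R - \sum_(x in C) g x
  end.

Lemma double_half_real (k : nat) : odd k -> 2 * (k.-1./2)%:R = k%:R - 1 :> RR.
Proof.
by move=> /double_half/(congr1 (fun z : int => z%:~R : RR)); rewrite intrM intrB.
Qed.

Lemma HSTAB_rslackP (g : V -> RR) :
  HSTAB e g <-> forall i, is_facet e i -> 0 <= rslack i g.
Proof.
have odd_cycle_rhs C : is_odd_cycle e C -> ((#|C|)%:R - 1) / 2 = (#|C|.-1./2)%:R :> RR.
  move=> [s [/and3P[_ Us _] odd_s ->]]; rewrite card_set_uniq //.
  by rewrite -double_half_real // mulrC mulKf // pnatr_eq0.
split=> [[g0 gK gC] [z|K|C] /= Fi | g_facets]; rewrite ?subr_ge0 //.
- exact: gK (maximal_clique_clique Fi).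
- case: Fi => Cch _; have Codd : is_odd_cycle e C.
    by case: Cch => s [? ? ? _]; exists s.
  by rewrite -odd_cycle_rhs //; apply: gC.
have g0 z : 0 <= g z := g_facets (FVertex z) I.
have gK K : is_maximal_clique e K -> \sum_(x in K) g x <= 1.
  by move=> mK; have := g_facets (FClique K) mK; rewrite subr_ge0.
have gC C : is_chordless_odd_cycle e C -> (5 <= #|C|)%N ->
    (\sum_(x in C) g x) * 2 <= 1 * (#|C|.-1)%:R.
  move=> Cch C5; have := g_facets (FCycle C) (conj Cch C5); rewrite /= subr_ge0.
  have [odd_C _] := card_chordless_odd_cycle Cch.
  by rewrite mul1r {2}(predn_double_half odd_C) -muln2 natrM ler_pM2r.
split=> // [K cK | C Codd]; first exact: (@clique_sum_le V e RR 1 g g0 gK K cK).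
have C3 : (3 <= #|C|)%N by case: Codd => s [/and3P[s3 Us _] _ ->]; rewrite card_set_uniq.
have := @odd_cycle_sum_le V e e_sym e_irr RR 1 g g0 gK gC C Codd.
by rewrite mul1r -subn1 natrB ?(leq_trans _ C3) // => S_le; rewrite ler_pdivlMr.
Qed.

Lemma sum_normalize (A : {set V}) (f : option V -> int) :
  \sum_(x in A) normalize f x = (\sum_(x in A) f (Some x))%:~R / (f None)%:~R.
Proof. by rewrite /normalize -mulr_suml rmorph_sum. Qed.

Lemma rslack_normalize i (f : option V -> int) : f None != 0 ->
  rslack i (normalize f) = (slack i f)%:~R / (f None)%:~R.
Proof.
move=> fN; have tN : (f None)%:~R != 0 :> RR by rewrite intr_eq0.
case: i => [z|K|C] //=; rewrite sum_normalize intrB mulrBl; first by rewrite divff.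
by rewrite rmorphM /= mulrAC divff // mul1r -pmulrn.
Qed.

Lemma HSTAB_normalize (f : option V -> int) :
  0 < f None -> HSTAB e (normalize f) <-> in_U e 0 f.
Proof.
move=> fpos; have tpos : 0 < (f None)%:~R :> RR by rewrite ltr0z.
rewrite HSTAB_rslackP in_UP; split=> H i Fi; have := H i Fi;
  by rewrite rslack_normalize ?gt_eqF // pmulr_lge0 ?invr_gt0 // ler0z.
Qed.

Lemma ehrhart_genP (f : option V -> int) : ehrhart_gen e f <-> 0 < f None /\ in_U e 0 f.
Proof.
split=> [[fpos Hf] | [fpos U0]]; split=> //; first by apply/(HSTAB_normalize fpos).
by apply/(HSTAB_normalize fpos).
Qed.

Lemma sum_indicator (A : {set V}) v : \sum_(x in A) ((x == v)%:R : RR) = (v \in A)%:R.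
Proof.
have [vA|vNA] := boolP (v \in A).
  by rewrite (bigD1 v) //= eqxx big1 ?addr0 // => x /andP[_ /negbTE ->].
by rewrite big1 // => x xA; case: eqP => // xv; rewrite -xv xA in vNA.
Qed.

Definition unit_point (o : option V) : V -> RR :=
  if o is Some v then fun x => (x == v)%:R else fun=> 0.

Lemma HSTAB_unit_point o : HSTAB e (unit_point o).
Proof.
apply/HSTAB_rslackP => -[z|K|C] /= Fi; case: o => [v|] /=.
- by case: (z == v).
- by [].
- by rewrite sum_indicator subr_ge0; case: (v \in K).
- by rewrite big1 // subr0.
- case: Fi => _ /half_ge2; rewrite lez_nat -(ler_nat RR) => h2.
  by rewrite sum_indicator subr_ge0; case: (v \in C) => /=; lra.
- by rewrite big1 // subr0.
Qed.

Lemma affine_hull_full (q : V -> RR) : affine_hull (HSTAB e) q.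
Proof.
pose lam o : RR := if o is Some z then q z else 1 - \sum_z q z.
exists #|{: option V}|, (fun i => lam (enum_val i)), (fun i => unit_point (enum_val i)).
split=> [i | | x]; first exact: HSTAB_unit_point.
  rewrite -(big_enum_val (fun o => lam o)) /= (eq_bigl predT) // sum_option /=.
  by rewrite addrNK.
rewrite -(big_enum_val (fun o => lam o * unit_point o x)) /= (eq_bigl predT) //.
rewrite sum_option /= mulr0 add0r (bigD1 x) //= eqxx mulr1 big1 ?addr0 //.
by move=> z /negbTE; rewrite eq_sym => ->; rewrite mulr0.
Qed.

Lemma rel_interior_ball (p : V -> RR) : rel_interior (HSTAB e) p ->
  exists2 eps, 0 < eps & forall q, (forall x, `|q x - p x| < eps) -> HSTAB e q.
Proof. by case=> _ [eps [eps0 near]]; exists eps => // q; apply: near (affine_hull_full q). Qed.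

Definition bump (p : V -> RR) (v : V) (d : RR) : V -> RR := fun x => p x + d * (x == v)%:R.

Lemma sum_bump (A : {set V}) p v d : v \in A ->
  \sum_(x in A) bump p v d x = \sum_(x in A) p x + d.
Proof. by move=> vA; rewrite big_split /= -mulr_sumr sum_indicator vA mulr1. Qed.

Lemma bump_near p v d x : `|bump p v d x - p x| <= `|d|.
Proof. by rewrite /bump addrC addKr normrM ler_piMr //; case: (x == v); rewrite normr_nat. Qed.

Lemma rslack_interior_gt0 (p : V -> RR) i :
  rel_interior (HSTAB e) p -> is_facet e i -> 0 < rslack i p.
Proof.
move=> intp Fi; have [eps eps0 near] := rel_interior_ball intp.
have bumpH v d : `|d| < eps -> HSTAB e (bump p v d).
  by move=> ltd; apply: near => x; apply: le_lt_trans (bump_near _ _ _ x) ltd.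
have eps2 : `|eps / 2| < eps by rewrite ger0_norm; lra.
have facet_bump j v d : is_facet e j -> `|d| < eps -> 0 <= rslack j (bump p v d).
  by move=> Fj ltd; apply: (HSTAB_rslackP _).1 (bumpH v d ltd) j Fj.
have set_case (A : {set V}) (c : RR) v : v \in A ->
    (forall d, `|d| < eps -> 0 <= c - \sum_(x in A) bump p v d x) ->
    0 < c - \sum_(x in A) p x.
  by move=> vA /(_ _ eps2); rewrite sum_bump //; lra.
case: i Fi => [z|K|C] /= Fi.
- have := facet_bump (FVertex z) z (- (eps / 2)) I; rewrite normrN /= /bump eqxx.
  by move=> /(_ eps2); rewrite mulr1; lra.
- have [->|[v vK]] := set_0Vmem K; first by rewrite big_set0 subr0.
  by apply: (set_case K 1 v vK) => d ltd; apply: (facet_bump (FClique K)).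
- case: Fi => Cch C5.
  have [v vC] : exists v, v \in C by apply/set0Pn; rewrite -card_gt0 (leq_trans _ C5).
  by apply: (set_case C _ v vC) => d ltd; apply: (facet_bump (FCycle C)).
Qed.

Lemma rslack_near (p q : V -> RR) d i : 0 <= d -> (forall x, `|q x - p x| <= d) ->
  rslack i p - (#|V|%:R + 1) * d <= rslack i q.
Proof.
move=> d0 near; have V0 : 0 <= #|V|%:R :> RR by [].
have sum_near (A : {set V}) : \sum_(x in A) q x <= \sum_(x in A) p x + #|V|%:R * d.
  rewrite -lerBlDl -sumrB; apply: le_trans (_ : \sum_(x in A) d <= _).
    by apply: ler_sum => x _; apply: le_trans (ler_norm _) (near x).
  rewrite sumr_const -[_ *+ _]mulr_natl.
  by apply: ler_wpM2r => //; rewrite ler_nat max_card.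
case: i => [z|K|C] /=.
- by have := near z; rewrite ler_distlC => /andP[_ +]; nra.
- by have := sum_near K; nra.
- by have := sum_near C; nra.
Qed.

Lemma rel_interior_of_rslack (p : V -> RR) c : 0 < c ->
  (forall i, is_facet e i -> c <= rslack i p) -> rel_interior (HSTAB e) p.
Proof.
move=> c0 p_slack; have V1 : 0 < #|V|%:R + 1 :> RR by rewrite ltr_wpDl.
split.
  by apply/HSTAB_rslackP => i Fi; apply: le_trans (ltW c0) (p_slack i Fi).
exists (c / (#|V|%:R + 1)); split=> [|q _ near]; first by rewrite divr_gt0.
apply/HSTAB_rslackP => i Fi; apply: le_trans (rslack_near i _ (fun x => ltW (near x))).
  by rewrite mulrC mulfVK ?gt_eqF // subr_ge0 p_slack.
by rewrite divr_ge0 ?ltW.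
Qed.

Lemma omega_genP (f : option V -> int) : omega_gen e f <-> in_U e 1 f.
Proof.
split=> [[fpos intp] | U1].
  have tpos : 0 < (f None)%:~R :> RR by rewrite ltr0z.
  apply/in_UP => i Fi; have := rslack_interior_gt0 intp Fi.
  by rewrite rslack_normalize ?gt_eqF // pmulr_lgt0 ?invr_gt0 // ltr0z.
have fpos : 0 < f None := lt_le_trans ltr01 (in_U_None_ge ler01 U1).
have tpos : 0 < (f None)%:~R :> RR by rewrite ltr0z.
split=> //; apply: (@rel_interior_of_rslack _ ((f None)%:~R)^-1); first by rewrite invr_gt0.
move=> i Fi; rewrite rslack_normalize ?gt_eqF // -[X in X <= _]mul1r ler_pM2r ?invr_gt0 //.
by rewrite ler1z; move/in_UP: U1; apply.
Qed.

End Polytope.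

Section LaurentMonomials.
Variables (V : finType) (K : fieldType).

Local Notation exponent := {ffun option V -> int}.
Local Notation n := #|{: option V}|.
Local Notation LF := (Lfield V K).
Local Notation Tmon := (@Tmon V K).
Local Notation constL := (@constL V K).

Lemma constLD : {morph constL : a b / a + b}.
Proof. by move=> a b; rewrite /constL /tofracL mpolyCD rmorphD. Qed.

Lemma constLM : {morph constL : a b / a * b}.
Proof. by move=> a b; rewrite /constL /tofracL mpolyCM rmorphM. Qed.

Lemma constLN : {morph constL : a / - a}.
Proof. by move=> a; rewrite /constL /tofracL mpolyCN rmorphN. Qed.

Lemma constL0 : constL 0 = 0.
Proof. by rewrite /constL /tofracL mpolyC0 rmorph0. Qed.

Lemma constL1 : constL 1 = 1.
Proof. by rewrite /constL /tofracL mpolyC1 rmorph1. Qed.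

Lemma constL_sum (I : Type) (r : seq I) (P : pred I) (F : I -> K) :
  constL (\sum_(i <- r | P i) F i) = \sum_(i <- r | P i) constL (F i).
Proof. by elim/big_rec2: _ => [|i a b _ <-]; rewrite ?constL0 ?constLD. Qed.

Lemma Tvar_neq0 (z : option V) : Tvar K z != 0.
Proof.
rewrite /Tvar /tofracL tofrac_eq0; apply/eqP => /(congr1 (mcoeff (U_(enum_rank z))%MM)).
by rewrite mcoeffX mcoeff0 eqxx => /eqP; rewrite oner_eq0.
Qed.

Lemma Tmon_neq0 (f : option V -> int) : Tmon f != 0.
Proof. by rewrite prodf_seq_neq0; apply/allP => z _; rewrite expfz_neq0 // Tvar_neq0. Qed.

Lemma TmonD (f g : exponent) : Tmon (f + g) = Tmon f * Tmon g.
Proof.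
by rewrite /Tmon -big_split; apply: eq_bigr => z _; rewrite ffunE expfzDr // Tvar_neq0.
Qed.

Lemma Tmon0 : Tmon (0 : exponent) = 1.
Proof. by rewrite /Tmon big1 // => z _; rewrite ffunE expr0z. Qed.

Lemma TmonN (f : exponent) : Tmon (- f) = (Tmon f)^-1.
Proof. by apply: (mulIf (Tmon_neq0 f)); rewrite -TmonD addNr Tmon0 mulVf ?Tmon_neq0. Qed.

Lemma Tmon_finfun (f : option V -> int) : Tmon (finfun f) = Tmon f.
Proof. by apply: eq_bigr => z _; rewrite ffunE. Qed.

Definition monomial (h : exponent) : 'X_{1..n} := [multinom `|h (enum_val i)|%N | i < n].

Lemma Tmon_monomial (h : exponent) : (forall o, 0 <= h o) ->
  Tmon h = tofracL 'X_[monomial h].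
Proof.
move=> h0; rewrite /Tmon /tofracL (mpolyXE_id K) rmorph_prod /=.
rewrite (reindex (@enum_rank _)) /=; last by apply: onW_bij; apply: enum_rank_bij.
apply: eq_bigr => z _; rewrite /Tvar /tofracL rmorphXn /= mnmE enum_rankK.
by rewrite exprnP abszE ger0_norm.
Qed.

Lemma monomial_inj (h h' : exponent) : (forall o, 0 <= h o) -> (forall o, 0 <= h' o) ->
  (monomial h == monomial h') = (h == h').
Proof.
move=> h0 h'0; apply/eqP/eqP => [E | -> //]; apply/ffunP => o.
have := congr1 (fun m : 'X_{1..n} => m (enum_rank o)) E; rewrite !mnmE enum_rankK.
by move=> /(congr1 Posz); rewrite !abszE !ger0_norm.
Qed.

Definition lsum (s : seq (K * exponent)) : LF := \sum_(p <- s) constL p.1 * Tmon p.2.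

Definition lcoef (s : seq (K * exponent)) (g : exponent) : K := \sum_(p <- s | p.2 == g) p.1.

Definition lshift (mu : exponent) (s : seq (K * exponent)) := [seq (p.1, p.2 + mu) | p <- s].

Definition lmul (s t : seq (K * exponent)) := [seq (p.1 * q.1, p.2 + q.2) | p <- s, q <- t].

Lemma lsum1 c g : lsum [:: (c, g)] = constL c * Tmon g.
Proof. by rewrite /lsum big_seq1. Qed.

Lemma lsum_cat s t : lsum (s ++ t) = lsum s + lsum t.
Proof. by rewrite /lsum big_cat. Qed.

Lemma lsum_shift mu s : lsum (lshift mu s) = lsum s * Tmon mu.
Proof. by rewrite /lsum big_map mulr_suml; apply: eq_bigr => p _; rewrite TmonD mulrA. Qed.

Lemma lsum_mul s t : lsum (lmul s t) = lsum s * lsum t.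
Proof.
elim: s => [|p s IH]; first by rewrite /lsum big_nil mul0r.
have -> : lsum (p :: s) = constL p.1 * Tmon p.2 + lsum s by rewrite /lsum big_cons.
rewrite /lmul allpairs_cons lsum_cat -/(lmul s t) IH mulrDl.
congr (_ + _); rewrite /lsum big_map mulr_sumr; apply: eq_bigr => q _ /=.
by rewrite constLM TmonD; ring.
Qed.

Lemma lcoef_shift mu s g : lcoef (lshift mu s) (g + mu) = lcoef s g.
Proof. by rewrite /lcoef big_map; apply: eq_bigl => p; rewrite (inj_eq (addIr mu)). Qed.

(* Multiplying by T^N with N large makes all exponents nonnegative, which turns the
   relation into one between distinct monomials of the polynomial ring. *)
Lemma lsum_eq0_lcoef s : lsum s = 0 -> forall g, lcoef s g = 0.
Proof.
move=> s0 g; pose N : exponent := [ffun o => \sum_(p <- g :: unzip2 s) `|p o|%:Z].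
have N_ge0 p : p \in g :: unzip2 s -> forall o, 0 <= (N + p) o.
  move=> ps o; rewrite !ffunE.
  have Np : `|p o|%:Z <= \sum_(q <- g :: unzip2 s) `|q o|%:Z.
    by rewrite (big_rem p ps) lerDl sumr_ge0.
  by rewrite -lerBlDr sub0r (le_trans _ Np) // abszE -normrN ler_norm.
pose P := \sum_(p <- s) p.1 *: 'X_[monomial (N + p.2)].
have tofracP : tofracL P = Tmon N * lsum s.
  have tofracZ c m : tofracL (c *: 'X_[m]) = constL c * tofracL 'X_[m].
    by rewrite -mul_mpolyC /tofracL rmorphM.
  rewrite /P /lsum mulr_sumr !big_seq; elim/big_rec2: _ => [|p x y ps <-].
    by rewrite /tofracL rmorph0.
  have -> : tofracL (p.1 *: 'X_[monomial (N + p.2)] + y) =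
            tofracL (p.1 *: 'X_[monomial (N + p.2)]) + tofracL y by rewrite /tofracL rmorphD.
  rewrite tofracZ -Tmon_monomial ?TmonD; first by congr (_ + _); ring.
  by apply: N_ge0; rewrite inE map_f ?orbT.
have coefP : P@_(monomial (N + g)) = lcoef s g.
  rewrite /P /lcoef raddf_sum [RHS]big_mkcond !big_seq; apply: eq_bigr => p ps /=.
  rewrite mcoeffZ mcoeffX monomial_inj ?(inj_eq (addrI N)); last 2 first.
  - by apply: N_ge0; rewrite inE map_f ?orbT.
  - by apply: N_ge0; rewrite mem_head.
  by case: (p.2 == g); rewrite ?mulr1 ?mulr0.
have /eqP P0 : P == 0 by rewrite -tofrac_eq0 -/(tofracL _) tofracP s0 mulr0.
by rewrite -coefP P0 mcoeff0.
Qed.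

Lemma lcoef_eq s t : lsum s = lsum t -> forall g, lcoef s g = lcoef t g.
Proof.
move=> st g; pose nt := [seq (- p.1, p.2) | p <- t].
have : lsum (s ++ nt) = 0.
  rewrite lsum_cat st /lsum big_map -big_split big1 //= => p _.
  by rewrite constLN mulNr addrN.
move/lsum_eq0_lcoef/(_ g)/eqP; rewrite /lcoef big_cat /= big_map /= sumrN subr_eq0.
by move/eqP.
Qed.

Lemma lsum_undup s :
  lsum s = \sum_(g <- undup (unzip2 s)) constL (lcoef s g) * Tmon g.
Proof.
under eq_bigr do rewrite constL_sum mulr_suml big_seq_cond.
rewrite (exchange_big_dep (mem s)) /=; last by move=> g p _ /andP[].
rewrite /lsum big_seq; apply: eq_bigr => p ps.
rewrite (eq_bigr (fun=> constL p.1 * Tmon p.2)) => [|g /andP[_ /eqP <-] //].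
rewrite -big_filter (eq_filter (a2 := pred1 p.2)) => [|g]; last by rewrite /= ps eq_sym.
by rewrite filter_pred1_uniq ?undup_uniq ?mem_undup ?map_f // big_seq1.
Qed.

End LaurentMonomials.

Lemma fun_of_finfun (aT : finType) (rT : Type) (f : aT -> rT) : (finfun f : aT -> rT) = f.
Proof. by apply: functional_extensionality => x; rewrite ffunE. Qed.

Lemma predext (T : Type) (P Q : T -> Prop) : (forall x, P x <-> Q x) -> P = Q.
Proof.
by move=> PQ; apply: functional_extensionality => x; apply: propositional_extensionality.
Qed.

Section MonomialSpans.
Variables (V : finType) (e : rel V).
Hypotheses (e_sym : ssrbool.symmetric e) (e_irr : irreflexive e).
Variable K : fieldType.

Local Notation exponent := {ffun option V -> int}.
Local Notation LF := (Lfield V K).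
Local Notation Tmon := (@Tmon V K).
Local Notation constL := (@constL V K).

Definition mspan (a : int) (x : LF) : Prop :=
  exists2 s : seq (K * exponent), (forall p, p \in s -> in_U e a p.2) & x = lsum s.

Lemma mspan_monomial a c (mu : exponent) : in_U e a mu -> mspan a (constL c * Tmon mu).
Proof. by move=> Umu; exists [:: (c, mu)]; rewrite ?lsum1 // => p /[!inE] /eqP ->. Qed.

Lemma mspan_Tmon a (mu : exponent) : in_U e a mu -> mspan a (Tmon mu).
Proof. by move=> /(mspan_monomial 1); rewrite constL1 mul1r. Qed.

Lemma mspan0 a : mspan a 0.
Proof. by exists [::] => //; rewrite /lsum big_nil. Qed.

Lemma mspanD a x y : mspan a x -> mspan a y -> mspan a (x + y).
Proof.
move=> [s sU ->] [t tU ->]; exists (s ++ t); last by rewrite lsum_cat.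
by move=> p; rewrite mem_cat => /orP[/sU | /tU].
Qed.

Lemma mspanM a b x y : mspan a x -> mspan b y -> mspan (a + b) (x * y).
Proof.
move=> [s sU ->] [t tU ->]; exists (lmul s t); last by rewrite lsum_mul.
by move=> _ /allpairsP[[p q] [ps qt ->]]; apply: in_U_add; [apply: sU | apply: tU].
Qed.

Lemma mspan_sum a (I : Type) (r : seq I) (P : pred I) (F : I -> LF) :
  (forall i, P i -> mspan a (F i)) -> mspan a (\sum_(i <- r | P i) F i).
Proof. by move=> FP; elim/big_ind: _ => //; [apply: mspan0 | apply: mspanD]. Qed.

Lemma mspan_lsumP a s :
  mspan a (lsum s) <-> forall g : exponent, ~ in_U e a g -> lcoef s g = 0.
Proof.
split=> [[t tU st] g notU | coef0].
  rewrite (lcoef_eq st) /lcoef big1_seq // => p /andP[/eqP pg pt].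
  by case: notU; rewrite -pg; apply: tU.
rewrite lsum_undup; apply: mspan_sum => g _.
have [Ug | notU] := Classical_Prop.classic (in_U e a g); first exact: mspan_monomial.
by rewrite coef0 // constL0 mul0r; apply: mspan0.
Qed.

Lemma mspan_TmonP a (mu : exponent) : mspan a (Tmon mu) <-> in_U e a mu.
Proof.
split; last exact: mspan_Tmon.
rewrite -[Tmon mu]mul1r -constL1 -lsum1 mspan_lsumP => coef0.
apply: Classical_Prop.NNPP => notU; have := coef0 mu notU.
by rewrite /lcoef big_cons big_nil eqxx addr0 => /eqP; rewrite oner_eq0.
Qed.

Lemma inR_Tmon (mu : exponent) : in_U e 0 mu -> inR e (Tmon mu).
Proof.
move=> U0; have [mu0 | mu_pos] := in_U0_cases U0.
  have -> : mu = 0 by apply/ffunP => o; rewrite mu0 ffunE.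
  by rewrite Tmon0 -constL1; apply: inR_const.
by apply: inR_gen; apply/(ehrhart_genP e_sym e_irr).
Qed.

Lemma inR_mspan x : inR e x <-> mspan 0 x.
Proof.
split=> [|[s sU ->]].
  elim=> {x} [c | f /(ehrhart_genP e_sym e_irr)[_ U0] | x y _ Ux _ Uy | x y _ Ux _ Uy].
  - by rewrite -[constL c]mulr1 -Tmon0; apply: mspan_monomial; apply: in_U0.
  - by rewrite -Tmon_finfun; apply: mspan_Tmon; rewrite fun_of_finfun.
  - exact: mspanD.
  - by rewrite -[0]addr0; apply: mspanM.
rewrite /lsum big_seq; elim/big_ind: _ => [|y z|p ps].
- by rewrite -constL0; apply: inR_const.
- exact: inR_add.
- by apply: inR_mul; [apply: inR_const | apply: inR_Tmon; apply: sU].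
Qed.

Lemma omega_mspan x : omega e x <-> mspan 1 x.
Proof.
split=> [[m [c [f [f_omega ->]]]] | [s sU ->]].
  apply: mspan_sum => i _; rewrite -Tmon_finfun; apply: mspan_monomial.
  by rewrite fun_of_finfun; apply/(omega_genP e_sym e_irr).
pose d : K * exponent := (0, 0).
exists (size s), (fun i => (nth d s i).1), (fun i => (nth d s i).2); split.
  by move=> i; apply/(omega_genP e_sym e_irr)/sU; rewrite mem_nth.
by rewrite /lsum (big_nth d) big_mkord.
Qed.

Lemma mspan_QR a x : mspan a x -> QR e x.
Proof.
move=> [s sU ->]; have [h Uh] := in_U_exists e `|a|.
have a_le : 0 <= a + `|a| by rewrite -lerBlDr sub0r lerNnormlW.
exists (lsum (lshift h s)), (Tmon h); split.
- apply/inR_mspan; exists (lshift h s) => // _ /mapP[p ps ->] /=.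
  exact: in_U_le a_le (in_U_add (sU p ps) Uh).
- by apply: inR_Tmon; apply: in_U_le Uh.
- exact: Tmon_neq0.
- by rewrite lsum_shift mulfK // Tmon_neq0.
Qed.

(* If g is outside U^(-a), a monomial T^mu of I tight on a facet violated by g puts
   g + mu outside U^(0), so the coefficient of T^g in x, which is that of T^(g + mu)
   in x T^mu, vanishes. *)
Lemma colonR_mspan (I : LF -> Prop) a :
  (forall y, I y -> mspan a y) ->
  (forall i, is_facet e i -> exists2 mu : exponent, I (Tmon mu) & slack i mu = a) ->
  colonR e I = mspan (- a).
Proof.
move=> I_span I_tight; apply: predext => x; split=> [[_ x_mul] | x_span]; last first.
  split=> [|y /I_span y_span]; first exact: mspan_QR x_span.
  by apply/inR_mspan; rewrite -(addNr a); apply: mspanM.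
have [i0 F0] := ex_facet e; have [nu Inu _] := I_tight i0 F0.
have [s0 _ E0] := (inR_mspan _).1 (x_mul _ Inu).
have xE : x = lsum (lshift (- nu) s0) by rewrite lsum_shift -E0 TmonN mulfK ?Tmon_neq0.
rewrite xE in x_mul *; apply/mspan_lsumP => g notU.
have [i Fi lt_i] := ex_violated_facet notU; have [mu Imu slack_mu] := I_tight i Fi.
have := (inR_mspan _).1 (x_mul _ Imu); rewrite -lsum_shift => /mspan_lsumP/(_ (g + mu)).
rewrite lcoef_shift; apply=> /in_UP/(_ i Fi); rewrite slackD slack_mu.
by rewrite -lerBlDr sub0r leNgt lt_i.
Qed.

Lemma colonR_mspan_mspan a : colonR e (mspan a) = mspan (- a).
Proof.
apply: colonR_mspan => // i Fi; have [mu [Umu slack_mu]] := facet_tight e_sym a Fi.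
by exists mu => //; apply: mspan_Tmon.
Qed.

Lemma dmul_mspan a b : dmul e (mspan a) (mspan b) = mspan (a + b).
Proof.
rewrite /dmul (@colonR_mspan (idprod (mspan a) (mspan b)) (a + b)).
- by rewrite colonR_mspan_mspan opprK.
- by move=> y [m [u [v [uv ->]]]]; apply: mspan_sum => i _; have [] := uv i; apply: mspanM.
- move=> i Fi; have [mu1 [U1 slack1]] := facet_tight e_sym a Fi.
  have [mu2 [U2 slack2]] := facet_tight e_sym b Fi.
  exists (mu1 + mu2); last by rewrite slackD slack1 slack2.
  exists 1%N, (fun=> Tmon mu1), (fun=> Tmon mu2); rewrite big_ord1 TmonD.
  by split=> // _; split; apply: mspan_Tmon.
Qed.

Lemma iter_dmul_mspan a k : iter k (dmul e (mspan a)) (mspan 0) = mspan (a * k%:Z).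
Proof.
elim: k => [|k IH]; first by rewrite mulr0.
by rewrite iterS IH dmul_mspan -addn1 PoszD mulrDr mulr1 addrC.
Qed.

Lemma dpow_omega (n : int) : dpow e (@omega V e K) n = mspan n.
Proof.
have inRE : @inR V e K = mspan 0 := predext inR_mspan.
have omegaE : @omega V e K = mspan 1 := predext omega_mspan.
case: n => m; rewrite /dpow inRE omegaE ?colonR_mspan_mspan iter_dmul_mspan.
  by rewrite mul1r.
by rewrite NegzE mulN1r.
Qed.

End MonomialSpans.

Theorem proposition3p7 (V : finType) (e : rel V)
  (e_sym : ssrbool.symmetric e) (e_irr : irreflexive e)
  (K : fieldType) (n : int) (mu : option V -> int) :
  @dpow V e K (@omega V e K) n (@Tmon V K mu) <-> in_U e n mu.
Proof.
by rewrite (dpow_omega e_sym e_irr) -Tmon_finfun mspan_TmonP fun_of_finfun.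
Qed.
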